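(* Let $s>-1/2$. Then for every $t\in\mathbb{R}$ the bilinear operator $B_2$ defined in the context maps $\dot H^s\times\dot H^s$ into $\dot H^{s+1}$ and satisfies $$\|B_2(u,v)\|_{\dot H^{s+1}}\le c_2(s+1)\|u\|_{\dot H^s}\|v\|_{\dot H^s},$$ with a constant $c_2(s+1)$ depending only on $s$.
   Context: Write $\mathbb{Z}_0=\mathbb{Z}\setminus\{0\}$. For $s\in\mathbb{R}$, $\dot H^s$ denotes the Hilbert space of complex sequences $v=(v_k)_{k\in\mathbb{Z}_0}$ with $\|v\|_{\dot H^s}^2=\sum_{k\in\mathbb{Z}_0}|k|^{2s}|v_k|^2<\infty$. For $t\in\mathbb{R}$, $$B_2(u,v)_k=\sum_{k_1+k_2=k,\ k_1,k_2\in\mathbb{Z}_0}\frac{e^{3ikk_1k_2t}u_{k_1}v_{k_2}}{k_1k_2},\qquad k\in\mathbb{Z}_0.$$ *)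

From Stdlib Require Import Reals ZArith.
From Coquelicot Require Import Coquelicot.
Open Scope R_scope.

(* Complex sequences indexed by Z_0 = Z \ {0} are modelled as functions
   Z -> C whose value at 0 is ignored. A sum over Z_0 is the series over
   n : nat of f(n+1) + f(-(n+1)). *)
Definition zterm {V : AbelianMonoid} (f : Z -> V) (n : nat) : V :=
  plus (f (Z.of_nat (S n))) (f (- Z.of_nat (S n))%Z).

Definition Hs_weight (s : R) (v : Z -> C) (k : Z) : R :=
  Rpower (IZR (Z.abs k)) (2 * s) * (Cmod (v k)) ^ 2.

Definition in_Hs (s : R) (v : Z -> C) : Prop :=
  ex_series (zterm (Hs_weight s v)).

Definition Hs_norm (s : R) (v : Z -> C) : R :=
  sqrt (Series (zterm (Hs_weight s v))).

(* summand of B_2(u,v)_k at index k1 (with k2 = k - k1);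
   zero when k1 = 0 or k2 = 0, i.e. the sum runs over k1, k2 in Z_0 *)
Definition B2_term (t : R) (u v : Z -> C) (k k1 : Z) : C :=
  let k2 := (k - k1)%Z in
  if orb (Z.eqb k1 0) (Z.eqb k2 0) then RtoC 0 else
  let theta := 3 * IZR k * IZR k1 * IZR k2 * t in
  Cdiv (Cmult (Cmult (cos theta, sin theta) (u k1)) (v k2))
       (RtoC (IZR k1 * IZR k2)).

Definition B2 (t : R) (u v : Z -> C) (k : Z) : C :=
  (Series (zterm (fun k1 => Re (B2_term t u v k k1))),
   Series (zterm (fun k1 => Im (B2_term t u v k k1)))).

(* Since |B_2(u,v)_k| <= sum_{k1 + k2 = k} X_{k1} Y_{k2} with X_k = |u_k| / |k| and
   Y_k = |v_k| / |k|, it suffices to bound the l^2 norm of |k|^(s+1) (X * Y)_k.  Splitting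
   |k|^(s+1) <= 2^(s+1) (|k1|^(s+1) + |k2|^(s+1)) yields two convolutions of an l^2 sequence
   (|k|^s |u_k|, whose l^2 norm is ||u||_{H^s}) with an l^1 sequence; Young's inequality
   bounds them.  The l^1 norms come from Cauchy-Schwarz,
   ||X||_{l^1}^2 <= ||u||_{H^s}^2 sum_{k <> 0} |k|^(-2(s+1)),
   and this p-series converges exactly when s > -1/2.  All sums over Z are handled on
   finite symmetric windows and passed to the limit. *)

From Stdlib Require Import Reals ZArith Lra Lia.
From Coquelicot Require Import Coquelicot.
Open Scope R_scope.

(** * Finite sums over integer intervals *)

Fixpoint zsum (f : Z -> R) (a : Z) (n : nat) : R :=
  match n with O => 0 | S n => f a + zsum f (a + 1)%Z n end.

Lemma zsum_ext f g a n : (forall i, f i = g i) -> zsum f a n = zsum g a n.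
Proof. intros fg; revert a; induction n; intros a; simpl; [|rewrite fg, IHn]; reflexivity. Qed.

Lemma zsum_plus f g a n : zsum (fun i => f i + g i) a n = zsum f a n + zsum g a n.
Proof. revert a; induction n; intros a; simpl; [|rewrite IHn]; lra. Qed.

Lemma zsum_scal c f a n : zsum (fun i => c * f i) a n = c * zsum f a n.
Proof. revert a; induction n; intros a; simpl; [|rewrite IHn]; lra. Qed.

Lemma zsum_le f g a n : (forall i, f i <= g i) -> zsum f a n <= zsum g a n.
Proof.
  intros fg; revert a; induction n; intros a; simpl; [lra|].
  specialize (IHn (a + 1)%Z); specialize (fg a); lra.
Qed.

Lemma zsum_nonneg f a n : (forall i, 0 <= f i) -> 0 <= zsum f a n.
Proof.
  intros f_ge0; revert a; induction n; intros a; simpl; [lra|].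
  specialize (IHn (a + 1)%Z); specialize (f_ge0 a); lra.
Qed.

Lemma zsum_split f a n m : zsum f a (n + m) = zsum f a n + zsum f (a + Z.of_nat n)%Z m.
Proof.
  revert a; induction n; intros a; simpl.
  - rewrite Z.add_0_r; lra.
  - rewrite IHn, Zpos_P_of_succ_nat, <- Z.add_1_l, Z.add_assoc; lra.
Qed.

Lemma zsum_last f a n : zsum f a (S n) = zsum f a n + f (a + Z.of_nat n)%Z.
Proof. rewrite <- Nat.add_1_r, zsum_split; simpl; lra. Qed.

Lemma zsum_shift f c a n : zsum (fun i => f (i + c)%Z) a n = zsum f (a + c)%Z n.
Proof.
  revert a; induction n; intros a; simpl; [reflexivity|].
  rewrite IHn; do 2 f_equal; lia.
Qed.

Lemma zsum_reflect f a n : zsum (fun i => f (- i)%Z) a n = zsum f (1 - a - Z.of_nat n)%Z n.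
Proof.
  revert a; induction n; intros a; [reflexivity|].
  simpl zsum at 1; rewrite IHn, zsum_last, Nat2Z.inj_succ.
  replace (1 - (a + 1) - Z.of_nat n)%Z with (1 - a - Z.succ (Z.of_nat n))%Z by lia.
  replace (1 - a - Z.succ (Z.of_nat n) + Z.of_nat n)%Z with (- a)%Z by lia; lra.
Qed.

Lemma zsum_window_le f a n b m : (forall i, 0 <= f i) ->
  (a <= b)%Z -> (b + Z.of_nat m <= a + Z.of_nat n)%Z -> zsum f b m <= zsum f a n.
Proof.
  intros f_ge0 ab mn.
  set (d := Z.to_nat (b - a)).
  replace n with (d + (m + (n - (d + m))))%nat by lia.
  rewrite 2!zsum_split.
  replace (a + Z.of_nat d)%Z with b by lia.
  pose proof (zsum_nonneg f a d f_ge0).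
  pose proof (zsum_nonneg f (b + Z.of_nat m)%Z (n - (d + m)) f_ge0); lra.
Qed.

Lemma zsum_swap (F : Z -> Z -> R) a n b m :
  zsum (fun i => zsum (F i) b m) a n = zsum (fun j => zsum (fun i => F i j) a n) b m.
Proof.
  revert a; induction n; intros a; simpl.
  - clear; revert b; induction m; intros b; simpl; [|rewrite <- IHm]; lra.
  - rewrite IHn, <- zsum_plus; reflexivity.
Qed.

Lemma is_lim_seq_zsum (F : nat -> Z -> R) (G : Z -> R) a n :
  (forall i, is_lim_seq (fun M => F M i) (G i)) ->
  is_lim_seq (fun M => zsum (F M) a n) (zsum G a n).
Proof.
  intros FG; revert a; induction n; intros a; simpl.
  - apply is_lim_seq_const.
  - apply is_lim_seq_plus'; [apply FG | apply IHn].
Qed.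

Lemma discriminant_le F P G :
  0 <= G -> (forall t, 0 <= F - 2 * t * P + t ^ 2 * G) -> P ^ 2 <= F * G.
Proof.
  intros G_ge0 quad.
  destruct (Req_dec G 0) as [G0|G0].
  - subst G; destruct (Req_dec P 0) as [P0|P0].
    + subst P; specialize (quad 0); lra.
    + specialize (quad ((F + 1) / (2 * P))).
      replace (F - 2 * ((F + 1) / (2 * P)) * P + ((F + 1) / (2 * P)) ^ 2 * 0) with (-1)
        in quad by (field; exact P0); lra.
  - specialize (quad (P / G)).
    replace (F - 2 * (P / G) * P + (P / G) ^ 2 * G) with ((F * G - P ^ 2) / G) in quad
      by (field; exact G0).
    apply Rmult_le_compat_r with (r := G) in quad; [|exact G_ge0].
    unfold Rdiv in quad; rewrite Rmult_assoc, Rinv_l, Rmult_1_r in quad by exact G0; lra.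
Qed.

Lemma zsum_cauchy_schwarz f g a n :
  (zsum (fun i => f i * g i) a n) ^ 2 <=
  zsum (fun i => f i ^ 2) a n * zsum (fun i => g i ^ 2) a n.
Proof.
  apply discriminant_le; [apply zsum_nonneg; intros; apply pow2_ge_0|].
  intros t.
  replace (_ - _ + _) with (zsum (fun i => (f i - t * g i) ^ 2) a n)
    by (rewrite (zsum_ext _ (fun i => (f i ^ 2 + - (2 * t) * (f i * g i)) + t ^ 2 * g i ^ 2))
          by (intros; ring);
        rewrite 2!zsum_plus, 2!zsum_scal; ring).
  apply zsum_nonneg; intros; apply pow2_ge_0.
Qed.

Lemma zsum_cauchy_schwarz_weighted p w a n : (forall i, 0 <= w i) ->
  (zsum (fun i => p i * w i) a n) ^ 2 <=
  zsum (fun i => w i * p i ^ 2) a n * zsum w a n.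
Proof.
  intros w_ge0.
  rewrite (zsum_ext (fun i => p i * w i) (fun i => (p i * sqrt (w i)) * sqrt (w i)))
    by (intros; rewrite Rmult_assoc, sqrt_sqrt; auto).
  eapply Rle_trans; [apply zsum_cauchy_schwarz|].
  right; f_equal; apply zsum_ext; intros i.
  - replace ((p i * sqrt (w i)) ^ 2) with (p i ^ 2 * (sqrt (w i) * sqrt (w i))) by ring.
    rewrite sqrt_sqrt by auto; ring.
  - simpl; rewrite Rmult_1_r, sqrt_sqrt by auto; reflexivity.
Qed.

(** * Series over Z \ {0} via symmetric windows *)

Definition sym_sum (N : nat) (f : Z -> R) : R := zsum f (- Z.of_nat N) (2 * N + 1).

Lemma zterm_eq (f : Z -> R) n : zterm f n = f (Z.of_nat (S n)) + f (- Z.of_nat (S n))%Z.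
Proof. reflexivity. Qed.

Lemma zterm_ext_nonzero (f g : Z -> R) n :
  (forall i, i <> 0%Z -> f i = g i) -> zterm f n = zterm g n.
Proof. intros fg; rewrite !zterm_eq, !fg by lia; reflexivity. Qed.

Lemma sym_sum_S f N : sym_sum (S N) f = sym_sum N f + zterm f N.
Proof.
  unfold sym_sum; rewrite zterm_eq.
  replace (2 * S N + 1)%nat with (S (S (2 * N + 1))) by lia.
  rewrite zsum_last.
  change (zsum f _ (S ?n)) with (f (- Z.of_nat (S N))%Z + zsum f (- Z.of_nat (S N) + 1)%Z n).
  replace (- Z.of_nat (S N) + 1)%Z with (- Z.of_nat N)%Z by lia.
  replace (- Z.of_nat (S N) + Z.of_nat (S (2 * N + 1)))%Z with (Z.of_nat (S N)) by lia.
  lra.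
Qed.

Lemma sum_n_zterm f n : f 0%Z = 0 -> sum_n (zterm f) n = sym_sum (S n) f.
Proof.
  intros f0; induction n.
  - rewrite sum_O, sym_sum_S; unfold sym_sum; simpl; rewrite f0; lra.
  - rewrite sum_Sn, IHn, (sym_sum_S f (S n)); reflexivity.
Qed.

Lemma sym_sum_scal c f N : sym_sum N (fun i => c * f i) = c * sym_sum N f.
Proof. apply zsum_scal. Qed.

Lemma sym_sum_swap (F : Z -> Z -> R) N M :
  sym_sum N (fun k => sym_sum M (F k)) = sym_sum M (fun j => sym_sum N (fun k => F k j)).
Proof. apply zsum_swap. Qed.

Section NonnegSeries.

Variable f : Z -> R.
Hypothesis f_ge0 : forall i, 0 <= f i.
Hypothesis f0 : f 0%Z = 0.

Lemma zterm_nonneg n : 0 <= zterm f n.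
Proof.
  rewrite zterm_eq; pose proof (f_ge0 (Z.of_nat (S n))); pose proof (f_ge0 (- Z.of_nat (S n))); lra.
Qed.

Lemma sym_sum_nonneg N : 0 <= sym_sum N f.
Proof. apply zsum_nonneg, f_ge0. Qed.

Lemma is_lim_seq_sym_sum : ex_series (zterm f) ->
  is_lim_seq (fun N => sym_sum N f) (Series (zterm f)).
Proof.
  intros fsum; apply is_lim_seq_incr_1.
  apply (is_lim_seq_ext (sum_n (zterm f))); [intros; apply sum_n_zterm, f0|].
  apply Series_correct, fsum.
Qed.

Lemma sym_sum_le_Series N : ex_series (zterm f) -> sym_sum N f <= Series (zterm f).
Proof.
  intros fsum; apply (is_lim_seq_incr_compare (fun N => sym_sum N f));
    [apply is_lim_seq_sym_sum, fsum|].
  intros n; rewrite sym_sum_S; pose proof (zterm_nonneg n); lra.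
Qed.

Lemma Series_zterm_ge_0 : ex_series (zterm f) -> 0 <= Series (zterm f).
Proof.
  intros fsum; eapply Rle_trans; [apply (sym_sum_nonneg 0) | apply sym_sum_le_Series, fsum].
Qed.

Lemma zsum_le_Series a n : ex_series (zterm f) -> zsum f a n <= Series (zterm f).
Proof.
  intros fsum; eapply Rle_trans; [|apply (sym_sum_le_Series (Z.to_nat (Z.abs a) + n)), fsum].
  apply zsum_window_le; [exact f_ge0| lia | lia].
Qed.

Lemma le_Series_zterm i : ex_series (zterm f) -> f i <= Series (zterm f).
Proof. intros fsum; pose proof (zsum_le_Series i 1 fsum); simpl in *; lra. Qed.

Lemma ex_series_of_sym_sum_le B : (forall N, sym_sum N f <= B) ->
  ex_series (zterm f) /\ Series (zterm f) <= B.
Proof.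
  intros fB.
  assert (fsum : ex_series (zterm f)).
  { destruct (ex_finite_lim_seq_incr (sum_n (zterm f)) B) as [l fl].
    - intros n; rewrite sum_Sn; change (plus ?x ?y) with (x + y).
      pose proof (zterm_nonneg (S n)); lra.
    - intros n; rewrite sum_n_zterm; [apply fB | exact f0].
    - exists l; exact fl. }
  split; [exact fsum|].
  apply (is_lim_seq_le _ _ _ _ fB (is_lim_seq_sym_sum fsum) (is_lim_seq_const B)).
Qed.

End NonnegSeries.

Lemma sym_sum_reflect h k M :
  sym_sum M (fun j => h (k - j)%Z) = zsum h (k - Z.of_nat M)%Z (2 * M + 1).
Proof.
  unfold sym_sum.
  rewrite (zsum_ext _ (fun j => h (- j + k)%Z)) by (intros; f_equal; lia).
  rewrite (zsum_reflect (fun i => h (i + k)%Z)), zsum_shift; f_equal; lia.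
Qed.

Lemma sym_sum_translate h j N :
  sym_sum N (fun k => h (k - j)%Z) = zsum h (- Z.of_nat N - j)%Z (2 * N + 1).
Proof.
  unfold sym_sum.
  rewrite (zsum_ext _ (fun k => h (k + - j)%Z)) by (intros; f_equal; lia).
  rewrite zsum_shift; reflexivity.
Qed.

(** * The p-series bound *)

Lemma Rpower_gt_0 x y : 0 < Rpower x y.
Proof. apply exp_pos. Qed.

Lemma Rpower_opp_succ_le q m : 0 < q -> 1 < m ->
  Rpower m (- (q + 1)) <= (Rpower (m - 1) (- q) - Rpower m (- q)) / q.
Proof.
  intros q_gt0 m_gt1; unfold Rpower.
  set (d := ln m - ln (m - 1)).
  assert (d_ge : 1 / m <= d).
  { (* [ln y <= y - 1] at [y = (m - 1) / m] *)
    pose proof (exp_ineq1_le (ln ((m - 1) / m))) as ln_le.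
    rewrite exp_ln in ln_le by (apply Rdiv_lt_0_compat; lra).
    rewrite ln_div in ln_le by lra; unfold d.
    replace ((m - 1) / m) with (1 - 1 / m) in ln_le by (field; lra); lra. }
  replace (exp (- (q + 1) * ln m)) with (exp (- q * ln m) / m)
    by (replace (- (q + 1) * ln m) with (- q * ln m + - ln m) by ring;
        rewrite exp_plus, exp_Ropp, exp_ln by lra; reflexivity).
  replace (exp (- q * ln (m - 1))) with (exp (- q * ln m) * exp (q * d))
    by (rewrite <- exp_plus; f_equal; unfold d; ring).
  pose proof (exp_ineq1_le (q * d)); pose proof (exp_pos (- q * ln m)).
  apply Rmult_le_reg_r with q; [exact q_gt0|].
  replace ((exp (- q * ln m) * exp (q * d) - exp (- q * ln m)) / q * q)
    with (exp (- q * ln m) * (exp (q * d) - 1)) by (field; lra).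
  replace (exp (- q * ln m) / m * q) with (exp (- q * ln m) * (q * (1 / m))) by (field; lra).
  apply Rmult_le_compat_l; [lra|].
  apply Rmult_le_compat_l with (r := q) in d_ge; lra.
Qed.

Lemma sum_n_Rpower_opp_le q N : 0 < q ->
  sum_n (fun n => Rpower (INR (S n)) (- (q + 1))) N <= 1 + (1 - Rpower (INR (S N)) (- q)) / q.
Proof.
  intros q_gt0; induction N.
  - rewrite sum_O; unfold Rpower; simpl; rewrite ln_1, !Rmult_0_r, exp_0; lra.
  - rewrite sum_Sn; change (plus ?x ?y) with (x + y).
    pose proof (Rpower_opp_succ_le q (INR (S (S N))) q_gt0) as step.
    replace (INR (S (S N)) - 1) with (INR (S N)) in step by (rewrite !S_INR; ring).
    assert (1 < INR (S (S N))) by (rewrite !S_INR; pose proof (pos_INR N); lra).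
    specialize (step ltac:(assumption)).
    set (a := Rpower (INR (S N)) (- q)) in *; set (b := Rpower (INR (S (S N))) (- q)) in *.
    replace (1 + (1 - b) / q) with (1 + (1 - a) / q + (a - b) / q) by (field; lra); lra.
Qed.

Definition absZ (k : Z) : R := IZR (Z.abs k).

Definition zpow (r : R) (k : Z) : R := if Z.eqb k 0 then 0 else Rpower (absZ k) r.

Definition pseries_const (r : R) : R := 2 * (1 + 1 / (2 * r - 1)).

Lemma absZ_gt_0 k : k <> 0%Z -> 0 < absZ k.
Proof. intros k0; apply IZR_lt; lia. Qed.

Lemma zpow_ge_0 r k : 0 <= zpow r k.
Proof. unfold zpow; destruct (Z.eqb k 0); [lra | left; apply Rpower_gt_0]. Qed.

Lemma sym_sum_zpow_opp_sq_le r M : 1 / 2 < r ->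
  sym_sum M (fun j => zpow (- r) j ^ 2) <= pseries_const r.
Proof.
  intros r_gt; set (q := 2 * r - 1); assert (q_gt0 : 0 < q) by (unfold q; lra).
  destruct M as [|M].
  { unfold sym_sum, pseries_const, zpow; simpl; fold q.
    assert (0 < 1 / q) by (apply Rdiv_lt_0_compat; lra); lra. }
  rewrite <- sum_n_zterm by (unfold zpow; simpl; ring).
  rewrite (sum_n_ext _ (fun n => mult 2 (Rpower (INR (S n)) (- (q + 1))))).
  2:{ intros n; rewrite zterm_eq; unfold zpow, absZ.
      destruct (Z.eqb_spec (Z.of_nat (S n)) 0), (Z.eqb_spec (- Z.of_nat (S n)) 0); try lia.
      rewrite Z.abs_opp, Z.abs_eq, <- INR_IZR_INZ by lia.
      replace (- (q + 1)) with (- r + - r) by (unfold q; ring).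
      rewrite Rpower_plus; set (p := Rpower _ (- r)).
      change (p ^ 2 + p ^ 2 = 2 * (p * p)); ring. }
  rewrite sum_n_mult_l; change (mult ?x ?y) with (x * y).
  unfold pseries_const; fold q; apply Rmult_le_compat_l; [lra|].
  eapply Rle_trans; [apply sum_n_Rpower_opp_le, q_gt0|].
  pose proof (Rpower_gt_0 (INR (S M)) (- q)).
  apply Rplus_le_compat_l; unfold Rdiv.
  apply Rmult_le_compat_r; [left; apply Rinv_0_lt_compat|]; lra.
Qed.

Definition mod_div (u : Z -> C) (k : Z) : R :=
  if Z.eqb k 0 then 0 else Cmod (u k) / absZ k.

Definition wmod (r : R) (u : Z -> C) (k : Z) : R := zpow r k * mod_div u k.

Lemma mod_div_ge_0 u k : 0 <= mod_div u k.
Proof.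
  unfold mod_div; destruct (Z.eqb_spec k 0) as [|k0]; [lra|].
  apply Rdiv_le_0_compat; [apply Cmod_ge_0 | apply absZ_gt_0, k0].
Qed.

Lemma wmod_ge_0 r u k : 0 <= wmod r u k.
Proof. apply Rmult_le_pos; [apply zpow_ge_0 | apply mod_div_ge_0]. Qed.

Lemma wmod_0 r u : wmod r u 0%Z = 0.
Proof. unfold wmod, zpow; simpl; ring. Qed.

Lemma Series_wmod_sq_ge_0 r u :
  ex_series (zterm (fun j => wmod r u j ^ 2)) -> 0 <= Series (zterm (fun j => wmod r u j ^ 2)).
Proof. apply Series_zterm_ge_0; [intros; apply pow2_ge_0 | rewrite wmod_0; ring]. Qed.

Lemma Hs_weight_zpow r w k : k <> 0%Z -> Hs_weight r w k = (zpow r k * Cmod (w k)) ^ 2.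
Proof.
  intros k0; unfold Hs_weight, zpow; destruct (Z.eqb_spec k 0); [contradiction|].
  replace (2 * r) with (r + r) by ring; rewrite Rpower_plus; fold (absZ k); ring.
Qed.

Lemma Hs_weight_wmod s u j : j <> 0%Z -> Hs_weight s u j = wmod (s + 1) u j ^ 2.
Proof.
  intros j0; rewrite Hs_weight_zpow by exact j0; f_equal.
  unfold wmod, zpow, mod_div; destruct (Z.eqb_spec j 0); [contradiction|].
  pose proof (absZ_gt_0 j j0).
  rewrite Rpower_plus, Rpower_1 by assumption; field; lra.
Qed.

Lemma mod_div_wmod r u j : mod_div u j = wmod r u j * zpow (- r) j.
Proof.
  unfold wmod, zpow; destruct (Z.eqb_spec j 0); [unfold mod_div; subst; simpl; ring|].
  rewrite Rpower_Ropp; pose proof (Rpower_gt_0 (absZ j) r); field; lra.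
Qed.

Lemma zpow_triangle r k j : 0 <= r -> j <> 0%Z -> (k - j)%Z <> 0%Z ->
  zpow r k <= Rpower 2 r * (zpow r j + zpow r (k - j)).
Proof.
  intros r_ge0 j0 kj0; unfold zpow.
  destruct (Z.eqb_spec k 0), (Z.eqb_spec j 0), (Z.eqb_spec (k - j) 0); try contradiction.
  { pose proof (Rpower_gt_0 2 r); pose proof (Rpower_gt_0 (absZ j) r);
      pose proof (Rpower_gt_0 (absZ (k - j)) r); nra. }
  assert (k_le : absZ k <= absZ j + absZ (k - j))
    by (unfold absZ; rewrite <- plus_IZR; apply IZR_le; lia).
  pose proof (absZ_gt_0 k n); pose proof (absZ_gt_0 j j0); pose proof (absZ_gt_0 (k - j) kj0).
  pose proof (Rpower_gt_0 (absZ j) r); pose proof (Rpower_gt_0 (absZ (k - j)) r).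
  (* |k| <= 2 max(|j|, |k - j|) *)
  destruct (Rle_dec (absZ j) (absZ (k - j))).
  - assert (Rpower (absZ k) r <= Rpower (2 * absZ (k - j)) r) by (apply Rle_Rpower_l; lra).
    rewrite <- Rpower_mult_distr in * by lra; pose proof (Rpower_gt_0 2 r); nra.
  - assert (Rpower (absZ k) r <= Rpower (2 * absZ j) r) by (apply Rle_Rpower_l; lra).
    rewrite <- Rpower_mult_distr in * by lra; pose proof (Rpower_gt_0 2 r); nra.
Qed.

Lemma zpow_conv_split r u v k j : 0 <= r ->
  zpow r k * (mod_div u j * mod_div v (k - j)) <=
  Rpower 2 r * (wmod r u j * mod_div v (k - j) + mod_div u j * wmod r v (k - j)).
Proof.
  intros r_ge0; unfold wmod.
  assert (md0 : forall w, mod_div w 0%Z = 0) by reflexivity.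
  destruct (Z.eqb_spec j 0) as [->|j0]; [rewrite md0; lra|].
  destruct (Z.eqb_spec (k - j) 0) as [kj0|kj0]; [rewrite kj0, md0; lra|].
  pose proof (mod_div_ge_0 u j); pose proof (mod_div_ge_0 v (k - j)).
  pose proof (zpow_triangle r k j r_ge0 j0 kj0).
  assert (0 <= mod_div u j * mod_div v (k - j)) by (apply Rmult_le_pos; assumption).
  nra.
Qed.

Lemma Series_mod_div_sq_le r u : 1 / 2 < r ->
  ex_series (zterm (fun j => wmod r u j ^ 2)) ->
  ex_series (zterm (mod_div u)) /\
  Series (zterm (mod_div u)) ^ 2 <= Series (zterm (fun j => wmod r u j ^ 2)) * pseries_const r.
Proof.
  intros r_gt usum.
  set (B := Series (zterm (fun j => wmod r u j ^ 2)) * pseries_const r).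
  assert (sym_sq : forall N, sym_sum N (mod_div u) ^ 2 <= B).
  { intros N; unfold sym_sum.
    rewrite (zsum_ext _ (fun j => wmod r u j * zpow (- r) j)) by (intros; apply mod_div_wmod).
    eapply Rle_trans; [apply zsum_cauchy_schwarz|].
    apply Rmult_le_compat; try (apply zsum_nonneg; intros; apply pow2_ge_0).
    - apply (sym_sum_le_Series (fun j => wmod r u j ^ 2)); [intros; apply pow2_ge_0 | | exact usum].
      rewrite wmod_0; ring.
    - apply sym_sum_zpow_opp_sq_le, r_gt. }
  assert (B_ge0 : 0 <= B)
    by (specialize (sym_sq 0%nat); pose proof (pow2_ge_0 (sym_sum 0 (mod_div u))); lra).
  destruct (ex_series_of_sym_sum_le (mod_div u) (mod_div_ge_0 u) eq_refl (sqrt B)) as [msum S_le].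
  { intros N; rewrite <- (sqrt_pow2 (sym_sum N (mod_div u)))
      by (apply sym_sum_nonneg, mod_div_ge_0).
    apply sqrt_le_1_alt, sym_sq. }
  split; [exact msum|].
  rewrite <- (pow2_sqrt B) by exact B_ge0; apply pow_incr; split; [|exact S_le].
  apply (Series_zterm_ge_0 _ (mod_div_ge_0 u) eq_refl msum).
Qed.

(** * Young's inequality l^2 * l^1 -> l^2 on finite windows *)

Section Convolution.

Variables f g : Z -> R.
Hypotheses (f_ge0 : forall i, 0 <= f i) (g_ge0 : forall i, 0 <= g i).
Hypotheses (f0 : f 0%Z = 0) (g0 : g 0%Z = 0).
Hypothesis gsum : ex_series (zterm g).

Lemma ex_series_conv k : ex_series (zterm f) -> ex_series (zterm (fun j => f j * g (k - j)%Z)).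
Proof.
  intros fsum.
  apply (ex_series_of_sym_sum_le _ (fun j => Rmult_le_pos _ _ (f_ge0 j) (g_ge0 _))
           ltac:(cbv beta; rewrite f0; ring) (Series (zterm g) * Series (zterm f))).
  intros N; eapply Rle_trans.
  - apply (zsum_le _ (fun j => Series (zterm g) * f j)); intros j.
    rewrite (Rmult_comm (Series _)); apply Rmult_le_compat_l; [apply f_ge0|].
    apply le_Series_zterm; assumption.
  - rewrite zsum_scal; apply Rmult_le_compat_l; [apply Series_zterm_ge_0; assumption|].
    apply sym_sum_le_Series; assumption.
Qed.

Hypothesis f2sum : ex_series (zterm (fun i => f i ^ 2)).

Lemma f_sq_ge0 i : 0 <= f i ^ 2.
Proof. apply pow2_ge_0. Qed.

Lemma f_sq_0 : f 0%Z ^ 2 = 0.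
Proof. rewrite f0; ring. Qed.

Lemma sym_sum_conv_l2_l1 N M :
  sym_sum N (fun k => (sym_sum M (fun j => f j * g (k - j)%Z)) ^ 2) <=
  Series (zterm g) ^ 2 * Series (zterm (fun i => f i ^ 2)).
Proof.
  set (Sg := Series (zterm g)); set (Sf2 := Series (zterm (fun i => f i ^ 2))).
  assert (Sg_ge0 : 0 <= Sg) by (apply Series_zterm_ge_0; assumption).
  assert (pointwise : forall k, (sym_sum M (fun j => f j * g (k - j)%Z)) ^ 2 <=
                              Sg * sym_sum M (fun j => g (k - j)%Z * f j ^ 2)).
  { intros k; eapply Rle_trans; [apply zsum_cauchy_schwarz_weighted; intros; apply g_ge0|].
    rewrite Rmult_comm; apply Rmult_le_compat_r.
    - apply zsum_nonneg; intros; apply Rmult_le_pos; [apply g_ge0 | apply pow2_ge_0].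
    - change (sym_sum M (fun j => g (k - j)%Z) <= Sg).
      rewrite sym_sum_reflect; apply zsum_le_Series; assumption. }
  apply Rle_trans with (sym_sum N (fun k => Sg * sym_sum M (fun j => g (k - j)%Z * f j ^ 2)));
    [apply zsum_le, pointwise|].
  rewrite sym_sum_scal, sym_sum_swap.
  replace (Sg ^ 2 * Sf2) with (Sg * (Sg * Sf2)) by ring.
  apply Rmult_le_compat_l; [exact Sg_ge0|].
  apply Rle_trans with (sym_sum M (fun j => Sg * f j ^ 2)).
  - apply zsum_le; intros j.
    replace (sym_sum N (fun k => g (k - j)%Z * f j ^ 2))
      with (f j ^ 2 * sym_sum N (fun k => g (k - j)%Z))
      by (rewrite <- sym_sum_scal; apply zsum_ext; intros; ring).
    rewrite Rmult_comm; apply Rmult_le_compat_r; [apply pow2_ge_0|].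
    rewrite sym_sum_translate; apply zsum_le_Series; assumption.
  - rewrite sym_sum_scal; apply Rmult_le_compat_l; [exact Sg_ge0|].
    apply (sym_sum_le_Series (fun i => f i ^ 2) f_sq_ge0 f_sq_0 M f2sum).
Qed.

Lemma sym_sum_conv_l1_l2 N M :
  sym_sum N (fun k => (sym_sum M (fun j => g j * f (k - j)%Z)) ^ 2) <=
  Series (zterm g) ^ 2 * Series (zterm (fun i => f i ^ 2)).
Proof.
  set (Sg := Series (zterm g)); set (Sf2 := Series (zterm (fun i => f i ^ 2))).
  assert (Sg_ge0 : 0 <= Sg) by (apply Series_zterm_ge_0; assumption).
  assert (pointwise : forall k, (sym_sum M (fun j => g j * f (k - j)%Z)) ^ 2 <=
                              Sg * sym_sum M (fun j => g j * f (k - j)%Z ^ 2)).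
  { intros k; unfold sym_sum at 1.
    rewrite (zsum_ext _ (fun j => f (k - j)%Z * g j)) by (intros; ring).
    eapply Rle_trans; [apply zsum_cauchy_schwarz_weighted; intros; apply g_ge0|].
    rewrite Rmult_comm; apply Rmult_le_compat_r.
    - apply zsum_nonneg; intros; apply Rmult_le_pos; [apply g_ge0 | apply pow2_ge_0].
    - apply sym_sum_le_Series; assumption. }
  apply Rle_trans with (sym_sum N (fun k => Sg * sym_sum M (fun j => g j * f (k - j)%Z ^ 2)));
    [apply zsum_le, pointwise|].
  rewrite sym_sum_scal, sym_sum_swap.
  replace (Sg ^ 2 * Sf2) with (Sg * (Sf2 * Sg)) by ring.
  apply Rmult_le_compat_l; [exact Sg_ge0|].
  apply Rle_trans with (sym_sum M (fun j => Sf2 * g j)).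
  - apply zsum_le; intros j.
    rewrite sym_sum_scal, Rmult_comm; apply Rmult_le_compat_r; [apply g_ge0|].
    rewrite (sym_sum_translate (fun i => f i ^ 2)).
    apply zsum_le_Series; [exact f_sq_ge0 | exact f_sq_0 | exact f2sum].
  - rewrite sym_sum_scal; apply Rmult_le_compat_l.
    + apply (Series_zterm_ge_0 _ f_sq_ge0 f_sq_0 f2sum).
    + apply sym_sum_le_Series; assumption.
Qed.

End Convolution.

Lemma Rabs_Series_le (a b : nat -> R) :
  (forall n, Rabs (a n) <= b n) -> ex_series b -> Rabs (Series a) <= Series b.
Proof.
  intros ab bsum.
  assert (abs_sum : ex_series (fun n => Rabs (a n))).
  { apply (@ex_series_le R_AbsRing R_CompleteNormedModule _ b); [|exact bsum].
    intros n; change (Rabs (Rabs (a n)) <= b n); rewrite Rabs_Rabsolu; apply ab. }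
  eapply Rle_trans; [apply Series_Rabs, abs_sum|].
  apply Series_le; [|exact bsum]; intros n; split; [apply Rabs_pos | apply ab].
Qed.

Lemma Rabs_zterm_le (f g : Z -> R) n :
  (forall i, Rabs (f i) <= g i) -> Rabs (zterm f n) <= zterm g n.
Proof.
  intros fg; rewrite !zterm_eq; eapply Rle_trans; [apply Rabs_triang|].
  apply Rplus_le_compat; apply fg.
Qed.

Lemma Cmod_B2_term t u v k j : Cmod (B2_term t u v k j) = mod_div u j * mod_div v (k - j).
Proof.
  unfold B2_term, mod_div.
  destruct (Z.eqb_spec j 0) as [|j0]; [simpl; rewrite Cmod_0; ring|].
  destruct (Z.eqb_spec (k - j) 0) as [|kj0]; [simpl; rewrite Cmod_0; ring|]; simpl.
  pose proof (absZ_gt_0 j j0); pose proof (absZ_gt_0 (k - j) kj0).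
  rewrite Cmod_div.
  2:{ intros E; apply (f_equal fst) in E; simpl in E.
      apply (Rmult_integral_contrapositive_currified (IZR j) (IZR (k - j)));
        [apply not_0_IZR; exact j0 | apply not_0_IZR; exact kj0 | exact E]. }
  assert (cis : Cmod (cos (3 * IZR k * IZR j * IZR (k - j) * t),
                       sin (3 * IZR k * IZR j * IZR (k - j) * t)) = 1).
  { unfold Cmod; simpl; rewrite !Rmult_1_r, Rplus_comm, <- !Rsqr_def, sin2_cos2; apply sqrt_1. }
  rewrite !Cmod_mult, cis, Cmod_R, Rabs_mult, <- !abs_IZR; fold (absZ j) (absZ (k - j)).
  field; lra.
Qed.

Lemma Cmod_B2_sq_le t u v k :
  ex_series (zterm (fun j => mod_div u j * mod_div v (k - j)%Z)) ->
  Cmod (B2 t u v k) ^ 2 <= 2 * Series (zterm (fun j => mod_div u j * mod_div v (k - j)%Z)) ^ 2.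
Proof.
  intros csum; set (S := Series _).
  assert (part_le : forall p : C -> R, (forall c, Rabs (p c) <= Cmod c) ->
            Rabs (Series (zterm (fun j => p (B2_term t u v k j)))) <= S).
  { intros p p_le; apply Rabs_Series_le; [|exact csum].
    intros n; apply Rabs_zterm_le; intros j; rewrite <- (Cmod_B2_term t); apply p_le. }
  assert (sq_le : forall x, Rabs x <= S -> x ^ 2 <= S ^ 2).
  { intros x x_le; rewrite <- (pow2_abs x); apply pow_incr; split; [apply Rabs_pos | exact x_le]. }
  rewrite Cmod2_alt; unfold B2, Re, Im; simpl fst; simpl snd.
  pose proof (sq_le _ (part_le _ re_le_Cmod)).
  pose proof (sq_le _ (part_le _ (fun c => Rle_trans _ _ _ (Rmax_r _ _) (Rmax_Cmod c)))).
  unfold Re, Im in *; lra.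
Qed.

Section Estimate.

Variables (r : R) (u v : Z -> C).
Hypothesis r_gt : 1 / 2 < r.
Hypotheses (usum : ex_series (zterm (fun j => wmod r u j ^ 2)))
           (vsum : ex_series (zterm (fun j => wmod r v j ^ 2))).

Let conv (k j : Z) : R := mod_div u j * mod_div v (k - j)%Z.
Let Wu : R := Series (zterm (fun j => wmod r u j ^ 2)).
Let Wv : R := Series (zterm (fun j => wmod r v j ^ 2)).
Let bound : R := 4 * Rpower 2 r ^ 2 * pseries_const r * Wu * Wv.

Lemma conv_ge_0 k j : 0 <= conv k j.
Proof. apply Rmult_le_pos; apply mod_div_ge_0. Qed.

Lemma conv_0 k : conv k 0%Z = 0.
Proof. unfold conv, mod_div at 1; simpl; ring. Qed.

Lemma ex_series_conv_mod_div k : ex_series (zterm (conv k)).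
Proof.
  apply ex_series_conv; try apply mod_div_ge_0; try reflexivity.
  - apply (Series_mod_div_sq_le r v r_gt vsum).
  - apply (Series_mod_div_sq_le r u r_gt usum).
Qed.

Lemma sym_sum_zpow_conv_sq_le N M :
  sym_sum N (fun k => (zpow r k * sym_sum M (conv k)) ^ 2) <= bound.
Proof.
  destruct (Series_mod_div_sq_le r u r_gt usum) as [u1 Su_le].
  destruct (Series_mod_div_sq_le r v r_gt vsum) as [v1 Sv_le].
  set (A := Rpower 2 r); set (Z_r := pseries_const r).
  set (D := fun k => sym_sum M (fun j => wmod r u j * mod_div v (k - j)%Z)).
  set (E := fun k => sym_sum M (fun j => mod_div u j * wmod r v (k - j)%Z)).
  assert (pointwise : forall k,
            (zpow r k * sym_sum M (conv k)) ^ 2 <= 2 * A ^ 2 * (D k ^ 2 + E k ^ 2)).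
  { intros k.
    assert (split_le : zpow r k * sym_sum M (conv k) <= A * (D k + E k)).
    { unfold D, E, sym_sum; rewrite <- zsum_plus, <- !zsum_scal.
      apply zsum_le; intros j; apply zpow_conv_split; lra. }
    assert (0 <= zpow r k * sym_sum M (conv k))
      by (apply Rmult_le_pos; [apply zpow_ge_0 | apply zsum_nonneg, conv_ge_0]).
    (* (D + E)^2 <= 2 (D^2 + E^2) *)
    pose proof (pow2_ge_0 (D k - E k)); pose proof (pow2_ge_0 A).
    apply Rle_trans with ((A * (D k + E k)) ^ 2); [apply pow_incr; lra | nra]. }
  pose proof (Series_wmod_sq_ge_0 r u usum) as Wu_ge0.
  pose proof (Series_wmod_sq_ge_0 r v vsum) as Wv_ge0.
  assert (D_le : sym_sum N (fun k => D k ^ 2) <= Wv * Z_r * Wu).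
  { eapply Rle_trans; [apply sym_sum_conv_l2_l1; auto using wmod_ge_0, mod_div_ge_0, wmod_0|].
    apply Rmult_le_compat_r; assumption. }
  assert (E_le : sym_sum N (fun k => E k ^ 2) <= Wu * Z_r * Wv).
  { eapply Rle_trans; [apply sym_sum_conv_l1_l2; auto using wmod_ge_0, mod_div_ge_0, wmod_0|].
    apply Rmult_le_compat_r; assumption. }
  apply Rle_trans with (sym_sum N (fun k => 2 * A ^ 2 * (D k ^ 2 + E k ^ 2)));
    [apply zsum_le, pointwise|].
  rewrite sym_sum_scal; unfold sym_sum at 1; rewrite zsum_plus.
  fold (sym_sum N (fun k => D k ^ 2)) (sym_sum N (fun k => E k ^ 2)).
  unfold bound; fold A Z_r.
  replace (4 * A ^ 2 * Z_r * Wu * Wv) with (2 * A ^ 2 * (Wv * Z_r * Wu + Wu * Z_r * Wv)) by ring.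
  apply Rmult_le_compat_l; [pose proof (pow2_ge_0 A); lra | lra].
Qed.

Lemma sym_sum_zpow_Series_conv_sq_le N :
  sym_sum N (fun k => (zpow r k * Series (zterm (conv k))) ^ 2) <= bound.
Proof.
  apply (is_lim_seq_le (fun M => sym_sum N (fun k => (zpow r k * sym_sum M (conv k)) ^ 2))
           (fun _ => bound) (sym_sum N (fun k => (zpow r k * Series (zterm (conv k))) ^ 2)) bound);
    [intros; apply sym_sum_zpow_conv_sq_le | | apply is_lim_seq_const].
  apply is_lim_seq_zsum; intros k.
  assert (lim : is_lim_seq (fun M => zpow r k * sym_sum M (conv k))
                           (zpow r k * Series (zterm (conv k)))).
  { apply is_lim_seq_mult'; [apply is_lim_seq_const|].
    exact (is_lim_seq_sym_sum (conv k) (conv_0 k) (ex_series_conv_mod_div k)). }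
  rewrite <- Rsqr_pow2; apply (is_lim_seq_ext (fun M => Rsqr (zpow r k * sym_sum M (conv k))));
    [intros; apply Rsqr_pow2 | apply is_lim_seq_mult'; exact lim].
Qed.

Lemma ex_series_Cmod_B2_term t k : ex_series (zterm (fun j => Cmod (B2_term t u v k j))).
Proof.
  apply (ex_series_ext (zterm (conv k))); [|apply ex_series_conv_mod_div].
  intros n; rewrite !zterm_eq, !Cmod_B2_term; reflexivity.
Qed.

Lemma Series_Hs_weight_B2_le t :
  ex_series (zterm (Hs_weight r (B2 t u v))) /\
  Series (zterm (Hs_weight r (B2 t u v))) <= 2 * bound.
Proof.
  set (h := fun k => (zpow r k * Cmod (B2 t u v k)) ^ 2).
  assert (h_eq : forall n, zterm h n = zterm (Hs_weight r (B2 t u v)) n)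
    by (intros n; apply zterm_ext_nonzero; intros k k0; rewrite Hs_weight_zpow by exact k0;
        reflexivity).
  destruct (ex_series_of_sym_sum_le h (fun k => pow2_ge_0 _) ltac:(unfold h, zpow; simpl; ring)
              (2 * bound)) as [hsum h_le].
  { intros N.
    apply Rle_trans with (sym_sum N (fun k => 2 * (zpow r k * Series (zterm (conv k))) ^ 2)).
    - apply zsum_le; intros k; unfold h.
      pose proof (Cmod_B2_sq_le t u v k (ex_series_conv_mod_div k)).
      pose proof (pow2_ge_0 (zpow r k)).
      replace ((zpow r k * Cmod (B2 t u v k)) ^ 2)
        with (zpow r k ^ 2 * Cmod (B2 t u v k) ^ 2) by ring.
      replace (2 * (zpow r k * Series (zterm (conv k))) ^ 2)
        with (zpow r k ^ 2 * (2 * Series (zterm (conv k)) ^ 2)) by ring.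
      apply Rmult_le_compat_l; assumption.
    - rewrite sym_sum_scal; apply Rmult_le_compat_l; [lra | apply sym_sum_zpow_Series_conv_sq_le]. }
  split; [exact (ex_series_ext _ _ h_eq hsum)|].
  rewrite <- (Series_ext _ _ h_eq); exact h_le.
Qed.

End Estimate.

Theorem lemma7p2 (s : R) (hs : -1/2 < s) :
  exists c2 : R, 0 <= c2 /\
  forall (t : R) (u v : Z -> C),
    in_Hs s u -> in_Hs s v ->
    (forall k : Z, ex_series (zterm (fun k1 => Cmod (B2_term t u v k k1)))) /\
    in_Hs (s + 1) (B2 t u v) /\
    Hs_norm (s + 1) (B2 t u v) <= c2 * Hs_norm s u * Hs_norm s v.
Proof.
  assert (r_gt : 1 / 2 < s + 1) by lra.
  set (K := 8 * Rpower 2 (s + 1) ^ 2 * pseries_const (s + 1)).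
  exists (sqrt K); split; [apply sqrt_pos|]; intros t u v usum vsum.
  assert (weight_eq : forall w n,
            zterm (Hs_weight s w) n = zterm (fun j => wmod (s + 1) w j ^ 2) n)
    by (intros; apply zterm_ext_nonzero; intros; apply Hs_weight_wmod; assumption).
  unfold in_Hs, Hs_norm in *.
  rewrite (Series_ext _ _ (weight_eq u)), (Series_ext _ _ (weight_eq v)).
  apply (ex_series_ext _ _ (weight_eq u)) in usum; apply (ex_series_ext _ _ (weight_eq v)) in vsum.
  destruct (Series_Hs_weight_B2_le (s + 1) u v r_gt usum vsum t) as [Bsum B_le].
  split; [exact (ex_series_Cmod_B2_term (s + 1) u v r_gt usum vsum t)|].
  split; [exact Bsum|].
  set (Wu := Series (zterm (fun j => wmod (s + 1) u j ^ 2))) in *.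
  set (Wv := Series (zterm (fun j => wmod (s + 1) v j ^ 2))) in *.
  assert (K_ge0 : 0 <= K).
  { unfold K, pseries_const; assert (0 < 1 / (2 * (s + 1) - 1)) by (apply Rdiv_lt_0_compat; lra).
    pose proof (pow2_ge_0 (Rpower 2 (s + 1))); nra. }
  pose proof (Series_wmod_sq_ge_0 (s + 1) u usum) as Wu_ge0.
  rewrite <- (sqrt_mult_alt K Wu), <- (sqrt_mult_alt (K * Wu))
    by (first [assumption | apply Rmult_le_pos; assumption]).
  apply sqrt_le_1_alt; unfold K; lra.
Qed.
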